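(* Let $Q$ be a generalized seed of length $s(Q)\le m$ and let $k\le m$. If $Q$ solves the cyclic $(m,k)$-problem, then for every integer $i\ge 0$ the generalized seed $Q_i=[Q,-^{m-s(Q)}]^i$ solves the (linear) $(m(i+1)+s(Q)-1,\,k)$-problem. Conversely, if $i\ge 1$ and $Q_i$ solves the $(m(i+1)+s(Q)-1,\,k)$-problem, then $Q$ solves the cyclic $(m,k)$-problem.
   Context: A generalized seed is a finite word over $\{\#,-\}$ (it may begin or end with the joker $-$); its length is called its span $s(Q)$. A binary word is an $(m,k)$-similarity if it has length $m$ and exactly $k$ zeros. $Q$ matches a binary word $w$ at position $j$ ($1\le j\le |w|-s(Q)+1$) if $w[j+t-1]=1$ for every $t$ with $Q[t]=\#$; $Q$ detects $w$ if it matches at some position. $Q$ solves the (linear) $(m,k)$-problem if it detects every $(m,k)$-similarity; $Q$ solves the cyclic $(m,k)$-problem if for every $(m,k)$-similarity $w$ it detects at least one cyclic rotation of $w$. For words $Q_1,Q_2$ over $\{\#,-\}$ and $i\ge0$, $[Q_1,Q_2]^i$ denotes the word $(Q_1Q_2)^iQ_1$; $-^{n}$ denotes $n$ jokers. *)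

From mathcomp Require Import all_boot.
Set Implicit Arguments. Unset Strict Implicit. Unset Printing Implicit Defensive.

(* A generalized seed is a word over {#,-}: encoded as seq bool,
   true = '#', false = '-' (joker).  Its span s(Q) is size Q.
   A binary word is a seq bool, true = 1, false = 0. *)

(* Q matches w at (0-indexed) position j: j + s(Q) <= |w| and every '#'
   of Q faces a 1 in w. (Paper's 1-indexed position j corresponds to j-1.) *)
Definition matches_at (Q w : seq bool) (j : nat) : Prop :=
  j + size Q <= size w /\
  (forall t, t < size Q -> nth false Q t -> nth false w (j + t)).

Definition detects (Q w : seq bool) : Prop := exists j, matches_at Q w j.

Definition similarity (m k : nat) (w : seq bool) : Prop :=
  size w = m /\ count (fun b => ~~ b) w = k.

Definition solves (Q : seq bool) (m k : nat) : Prop :=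
  forall w, similarity m k w -> detects Q w.

(* cyclic rotations of w: rot r w (for r >= size w, rot r w = w, so every
   rot r w is a cyclic rotation, and every rotation arises this way). *)
Definition solves_cyclic (Q : seq bool) (m k : nat) : Prop :=
  forall w, similarity m k w -> exists r, detects Q (rot r w).

Definition bracket_pow (Q1 Q2 : seq bool) (i : nat) : seq bool :=
  flatten (nseq i (Q1 ++ Q2)) ++ Q1.

Definition jokers (n : nat) : seq bool := nseq n false.

From mathcomp Require Import all_boot zify.

Set Implicit Arguments.
Unset Strict Implicit.

(* Write s = size Q and Q_i = [Q, -^(m-s)]^i, a seed of period m.
   1. Q_i matches a word w at j iff Q itself matches w at each of the
      positions j, j + m, ..., j + i*m (matches_at_bracket_pow).
   2. Detecting some rotation of a word u of length m amounts to a
      "cyclic match" of Q in u at an offset c, i.e. Q[t] = # implies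
      u[(c + t) mod m] = 1 (solves_cyclicP).
   3. Folding a word w modulo m (position c is 1 iff every position of w
      congruent to c is 1) does not increase the number of zeros; after
      turning some ones into zeros it becomes an (m,k)-similarity u whose
      ones force ones in w (fold_similarity).
   Forward direction: a cyclic match of Q in the folded word at offset c
   gives, by 1, a match of Q_i in w at c mod m.  Converse (i >= 1): embed
   u as 1^m u 1^* in a word of the linear length; a match of Q_i at j < m
   yields two copies of Q at j and j + m which together read u cyclically
   from offset j. *)

Lemma matches_at_cat (Q1 Q2 w : seq bool) (j : nat) :
  matches_at (Q1 ++ Q2) w j <->
  matches_at Q1 w j /\ matches_at Q2 w (j + size Q1).
Proof.
rewrite /matches_at size_cat; split.
- move=> [hsz hQ]; split; split; first lia.
  + by move=> t ht hq; apply: hQ; rewrite ?nth_cat ?ht //; lia.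
  + by lia.
  + move=> t ht hq; rewrite -addnA; apply: hQ; first lia.
    by rewrite nth_cat ltnNge leq_addr /= addKn.
- move=> [[_ h1] [hsz h2]]; split; first lia.
  move=> t ht; rewrite nth_cat; case: ltnP => htQ; first exact: h1.
  by move=> /(h2 (t - size Q1) ltac:(lia)); rewrite -addnA subnKC.
Qed.

Lemma matches_at_jokers (n : nat) (w : seq bool) (j : nat) :
  matches_at (jokers n) w j <-> j + n <= size w.
Proof.
rewrite /matches_at size_nseq; split=> [[] //|h]; split=> // t _.
by rewrite nth_nseq if_same.
Qed.

Lemma matches_at_bracket_pow (Q w : seq bool) (n i j : nat) :
  matches_at (bracket_pow Q (jokers n) i) w j <->
  forall l, l <= i -> matches_at Q w (j + l * (size Q + n)).
Proof.
elim: i j => [|i IH] j.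
  split=> [h l|h]; last by have := h 0 isT; rewrite addn0.
  by rewrite leqn0 => /eqP ->; rewrite addn0.
have -> : bracket_pow Q (jokers n) i.+1 = Q ++ jokers n ++ bracket_pow Q (jokers n) i.
  by rewrite /bracket_pow /= -!catA.
rewrite matches_at_cat matches_at_cat matches_at_jokers size_nseq -addnA IH.
set d := size Q + n.
have shift l : j + l.+1 * d = j + d + l * d by rewrite mulSn addnA.
split.
- move=> [hQ [_ hrest]] [|l] hl; first by rewrite addn0.
  by rewrite shift; apply: hrest.
- move=> h; split; first by have := h 0 isT; rewrite addn0.
  have hrest l : l <= i -> matches_at Q w (j + d + l * d).
    by move=> hl; rewrite -shift; apply: h.
  split=> //; have [hsz _] := hrest 0 isT; lia.
Qed.

Lemma nth_rot (u : seq bool) (r t : nat) : r <= size u -> t < size u ->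
  nth false (rot r u) t = nth false u ((r + t) %% size u).
Proof.
move=> hr ht; rewrite /rot nth_cat size_drop.
case: ltnP => htr; first by rewrite nth_drop modn_small //; lia.
rewrite nth_take; last lia.
have wrap : r + t = (r + t - size u) + size u by lia.
by rewrite wrap modnDr modn_small; [congr nth; lia | lia].
Qed.

Definition cyclic_match (Q u : seq bool) (c : nat) : Prop :=
  forall t, t < size Q -> nth false Q t -> nth false u ((c + t) %% size u).

Lemma detects_rot_cyclic_match (Q u : seq bool) (r : nat) :
  detects Q (rot r u) -> exists c, cyclic_match Q u c.
Proof.
move=> [j [hsz hQ]]; rewrite size_rot in hsz.
have [hr | hr] := leqP r (size u).
- exists (r + j) => t ht /(hQ t ht); rewrite nth_rot //; last lia.
  by rewrite addnA.
- exists j => t ht /(hQ t ht); rewrite rot_oversize ?(ltnW hr) // modn_small //.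
  lia.
Qed.

Lemma cyclic_match_detects_rot (Q u : seq bool) (c : nat) :
  size Q <= size u -> cyclic_match Q u c -> detects Q (rot (c %% size u) u).
Proof.
move=> hsz hc; exists 0; split; first by rewrite size_rot.
move=> t ht /(hc t ht); have hu0 : 0 < size u by lia.
rewrite add0n nth_rot; [by rewrite modnDml | by rewrite ltnW ?ltn_mod | lia].
Qed.

Lemma solves_cyclicP (Q : seq bool) (m k : nat) : size Q <= m ->
  solves_cyclic Q m k <->
  forall u, similarity m k u -> exists c, cyclic_match Q u c.
Proof.
move=> hQm; split=> hsol u hu.
- by have [r] := hsol u hu; apply: detects_rot_cyclic_match.
- have [c hc] := hsol u hu; exists (c %% size u).
  by apply: cyclic_match_detects_rot; rewrite // (proj1 hu).
Qed.

Definition fold_mod (m : nat) (w : seq bool) : seq bool :=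
  mkseq (fun c => all (fun q => (q %% m != c) || nth false w q) (iota 0 (size w))) m.

Lemma size_fold_mod (m : nat) (w : seq bool) : size (fold_mod m w) = m.
Proof. exact: size_mkseq. Qed.

Lemma fold_modP (m : nat) (w : seq bool) (q : nat) : 0 < m -> q < size w ->
  nth false (fold_mod m w) (q %% m) -> nth false w q.
Proof.
move=> hm hq; rewrite nth_mkseq ?ltn_mod // => /allP/(_ q).
by rewrite mem_iota add0n hq eqxx => /(_ isT).
Qed.

(* Each zero of the folded word is the residue of some zero of w, so folding
   does not create zeros. *)
Lemma count_fold_mod (m : nat) (w : seq bool) :
  count negb (fold_mod m w) <= count negb w.
Proof.
set zeros := [seq q <- iota 0 (size w) | ~~ nth false w q].
have -> : count negb w = size [seq q %% m | q <- zeros].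
  by rewrite size_map size_filter -{1}(mkseq_nth false w) count_map.
rewrite count_map -size_filter; apply: uniq_leq_size.
  exact/filter_uniq/iota_uniq.
move=> c; rewrite mem_filter /= -has_predC => /andP [/hasP [q hq]].
rewrite /= negb_or negbK => /andP [/eqP <- hwq] _.
by apply: map_f; rewrite mem_filter hwq.
Qed.

Lemma lower_to_count (u : seq bool) (k : nat) : count negb u <= k <= size u ->
  exists v, [/\ size v = size u, count negb v = k &
                forall p, nth false v p -> nth false u p].
Proof.
elim: u k => [|b u IH] k /andP [hlo hhi].
  by exists [::]; split=> //; move: hhi; rewrite leqn0 => /eqP ->.
have [-> | hne] := eqVneq k (count negb (b :: u)); first by exists (b :: u).
have [v [hv hcv hvu]] : exists v, [/\ size v = size u, count negb v = k.-1 &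
                forall p, nth false v p -> nth false u p].
  apply: IH; move: hlo hhi hne; rewrite /= => *; lia.
exists (false :: v); split=> /=; [by rewrite hv | lia |].
by case=> [|p] //= /hvu.
Qed.

Lemma fold_similarity (m k : nat) (w : seq bool) :
  0 < m -> k <= m -> count negb w = k ->
  exists u, similarity m k u /\
            forall q, q < size w -> nth false u (q %% m) -> nth false w q.
Proof.
move=> hm hkm hkw.
have [u [hu hku hsub]] : exists u, [/\ size u = size (fold_mod m w), count negb u = k &
    forall p, nth false u p -> nth false (fold_mod m w) p].
  by apply: lower_to_count; rewrite size_fold_mod hkm andbT -hkw count_fold_mod.
exists u; split; first by split; rewrite // hu size_fold_mod.
by move=> q hq /hsub; apply: fold_modP.
Qed.

Lemma periodic_seed_solves (Q : seq bool) (m k i : nat) :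
  size Q <= m -> k <= m -> solves_cyclic Q m k ->
  solves (bracket_pow Q (jokers (m - size Q)) i) (m * (i + 1) + size Q - 1) k.
Proof.
move=> hQm hkm /(solves_cyclicP k hQm) hcyc w [hw hkw].
have hperiod : size Q + (m - size Q) = m by rewrite subnKC.
have [m0 | hm] := posnP m.
  exists 0; apply/matches_at_bracket_pow => l _.
  rewrite hperiod m0 muln0; split; [lia | move=> t; lia].
have [u [hu hfold]] := fold_similarity hm hkm hkw.
have [c hc] := hcyc u hu.
exists (c %% m); apply/matches_at_bracket_pow; rewrite hperiod => l hl.
have hcm : c %% m < m by rewrite ltn_mod.
have hlm : l * m <= i * m by rewrite leq_mul2r hl orbT.
split; first by rewrite hw; nia.
move=> t ht hQt; apply: hfold; first by rewrite hw; nia.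
have -> : c %% m + l * m + t = l * m + (c %% m + t) by lia.
by rewrite modnMDl modnDml -(proj1 hu); apply: hc.
Qed.

Lemma nth_padded (a : nat) (u z : seq bool) (x : nat) : x < size u ->
  nth false (nseq a true ++ u ++ z) (a + x) = nth false u x.
Proof.
by move=> hx; rewrite nth_cat size_nseq ltnNge leq_addr /= addKn nth_cat hx.
Qed.

Lemma periodic_seed_solves_cyclic (Q : seq bool) (m k i : nat) :
  size Q <= m -> 1 <= i ->
  solves (bracket_pow Q (jokers (m - size Q)) i) (m * (i + 1) + size Q - 1) k ->
  solves_cyclic Q m k.
Proof.
move=> hQm hi hsol; apply/(solves_cyclicP k hQm) => u [hu hku].
have [hQ0 | hQpos] := posnP (size Q); first by exists 0 => t; rewrite hQ0.
set n := m * (i + 1) + size Q - 1.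
set w := nseq m true ++ u ++ nseq (n - 2 * m) true.
have hw : similarity n k w.
  split; first by rewrite !size_cat !size_nseq hu; nia.
  by rewrite !count_cat !count_nseq /= !mul0n addn0.
have [j /matches_at_bracket_pow] := hsol w hw.
rewrite subnKC // => hj.
have hjm : j < m by have [hsz _] := hj i (leqnn i); move: hsz; rewrite (proj1 hw); nia.
exists j => t ht hQt; rewrite hu.
have [hjt | hjt] := ltnP (j + t) m.
- have [_ /(_ t ht hQt)] := hj 1 hi.
  have -> : j + 1 * m + t = m + (j + t) by rewrite mul1n addnAC addnC.
  by rewrite /w nth_padded ?hu // modn_small.
- have [_ /(_ t ht hQt)] := hj 0 isT.
  rewrite mul0n addn0 -[j + t](subnKC hjt) /w nth_padded ?hu; last lia.
  by rewrite modnDl modn_small //; lia.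
Qed.

Theorem mainTheorem6 (Q : seq bool) (m k : nat) :
  size Q <= m -> k <= m ->
  (solves_cyclic Q m k ->
     forall i : nat,
       solves (bracket_pow Q (jokers (m - size Q)) i) (m * (i + 1) + size Q - 1) k)
  /\
  (forall i : nat, 1 <= i ->
     solves (bracket_pow Q (jokers (m - size Q)) i) (m * (i + 1) + size Q - 1) k ->
     solves_cyclic Q m k).
Proof.
move=> hQm hkm; split.
- by move=> hcyc i; apply: periodic_seed_solves.
- by move=> i hi; apply: periodic_seed_solves_cyclic.
Qed.
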